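(* Let $M_1$ and $M_2$ be matroids on disjoint ground sets $E_1$ and $E_2$, of ranks $r_1$ and $r_2$. Let $\mathcal{A}\subseteq\mathcal{B}(M_1\oplus M_2)$ be nonempty. Then $\mathcal{A}$ is the collection of bases of a matroid on $E_1\cup E_2$ if and only if $\mathcal{A}=\{X\cup Y : X\in\mathcal{A}_1,\ Y\in\mathcal{A}_2\}$ for some $\mathcal{A}_1\subseteq\mathcal{B}(M_1)$ and $\mathcal{A}_2\subseteq\mathcal{B}(M_2)$ which are collections of bases of matroids (on $E_1$ and $E_2$ respectively).
   Context: The direct sum $M_1\oplus M_2$ of matroids on disjoint ground sets $E_1,E_2$ is the matroid on $E_1\cup E_2$ with bases $\{B_1\cup B_2: B_1\in\mathcal{B}(M_1),\ B_2\in\mathcal{B}(M_2)\}$; it has rank $r_1+r_2$. *)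

From mathcomp Require Import all_boot.
Set Implicit Arguments. Unset Strict Implicit. Unset Printing Implicit Defensive.

Definition is_matroid_bases (T : finType) (E : {set T}) (B : {set {set T}}) : Prop :=
  [/\ B != set0,
      (forall X, X \in B -> X \subset E) &
      (forall B1 B2, B1 \in B -> B2 \in B ->
         forall x, x \in B1 :\: B2 ->
           exists2 y, y \in B2 :\: B1 & (B1 :\ x) :|: [set y] \in B)].

(* The family {X ∪ Y : X ∈ B1, Y ∈ B2}; for bases of M1, M2 on disjoint
   ground sets this is B(M1 ⊕ M2). *)
Definition sum_bases (T : finType) (B1 B2 : {set {set T}}) : {set {set T}} :=
  [set X :|: Y | X in B1, Y in B2].

From mathcomp Require Import all_boot.
Set Implicit Arguments. Unset Strict Implicit. Unset Printing Implicit Defensive.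

(* (<=) If A = A1 (+) A2 for basis families A1, A2 on E1, E2, then A is a
        basis family: a basis exchange inside one summand is a basis exchange
        of the sum ([sum_bases_matroid]).
   (=>) If A is a basis family, take for Ai the traces B :&: Ei of the members
        B of A.  Since B1 and B2 are antichains, an exchange in A that removes
        an element of Ei must insert an element of Ei ([exchange_stays_in]);
        hence each trace family is itself a basis family ([trace_matroid]).
        Moreover for B, B' in A the mixed set (B :&: E1) :|: (B' :&: E2) lies
        in A: exchanging elements of B :&: E2 towards B' one at a time keeps
        the E1-part fixed and terminates at the mixed set ([recombine]). *)

Lemma basis_subset_eq (T : finType) (E : {set T}) (B : {set {set T}}) X X' :
  is_matroid_bases E B -> X \in B -> X' \in B -> X' \subset X -> X' = X.
Proof.
case=> _ _ exB hX hX' sX'X; apply/eqP; rewrite eqEsubset sX'X /=.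
apply/subsetP=> x xX; apply: contraT => xnX'.
have xD : x \in X :\: X' by rewrite in_setD xnX' xX.
have [y] := exB X X' hX hX' x xD.
by rewrite in_setD => /andP[ynX /(subsetP sX'X) yX]; rewrite yX in ynX.
Qed.

Lemma setI_exchange_out (T : finType) (B E : {set T}) x y :
  y \notin E -> ((B :\ x) :|: [set y]) :&: E = (B :&: E) :\ x.
Proof.
move=> ynE; apply/setP=> z; rewrite !inE.
by case: (z =P y) => [->|_]; [rewrite (negbTE ynE) !andbF | rewrite orbF andbA].
Qed.

Lemma setI_exchange_in (T : finType) (B E : {set T}) x y :
  y \in E -> ((B :\ x) :|: [set y]) :&: E = ((B :&: E) :\ x) :|: [set y].
Proof.
move=> yE; apply/setP=> z; rewrite !inE.
by case: (z =P y) => [->|_]; [rewrite yE !orbT | rewrite !orbF andbA].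
Qed.

(* If the traces on E of B and of B - x + y are both bases of a matroid on E
   and x is in B :&: E, then y must lie in E: otherwise the second trace
   would be the proper subset (B :&: E) :\ x of the first. *)
Lemma exchange_stays_in (T : finType) (E : {set T}) (BE : {set {set T}}) B x y :
  is_matroid_bases E BE -> B :&: E \in BE ->
  ((B :\ x) :|: [set y]) :&: E \in BE -> x \in B :&: E -> y \in E.
Proof.
move=> mE hB hN xBE; apply: contraT => ynE.
rewrite setI_exchange_out // in hN.
have /setP/(_ x) := basis_subset_eq mE hB hN (subsetDl _ _).
by rewrite setD11 xBE.
Qed.

Definition trace (T : finType) (E : {set T}) (A : {set {set T}}) : {set {set T}} :=
  [set B :&: E | B in A].

Lemma trace_sub (T : finType) (E : {set T}) (A BE : {set {set T}}) :
  (forall B, B \in A -> B :&: E \in BE) -> trace E A \subset BE.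
Proof. by move=> AE; apply/subsetP=> _ /imsetP[B hB ->]; exact: AE. Qed.

Lemma trace_matroid (T : finType) (G E : {set T}) (A BE : {set {set T}}) :
  is_matroid_bases G A -> is_matroid_bases E BE ->
  (forall B, B \in A -> B :&: E \in BE) -> is_matroid_bases E (trace E A).
Proof.
case=> An _ exA mE AE; split.
- by case/set0Pn: An => B hB; apply/set0Pn; exists (B :&: E); exact: imset_f.
- by move=> _ /imsetP[B _ ->]; exact: subsetIr.
move=> _ _ /imsetP[B hB ->] /imsetP[B' hB' ->] x.
rewrite in_setD => /andP[xnB'E xBE]; have /setIP[xB xE] := xBE.
have xD : x \in B :\: B' by rewrite in_setD xB andbT; apply: contra xnB'E => xB'; apply/setIP.
have [y] := exA B B' hB hB' x xD.
rewrite in_setD => /andP[ynB yB'] hN.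
have yE := exchange_stays_in mE (AE _ hB) (AE _ hN) xBE.
exists y; first by rewrite !inE (negbTE ynB) yB' yE.
by rewrite -setI_exchange_in //; exact: imset_f.
Qed.

Section Recombination.
Variables (T : finType) (E F : {set T}) (BF A : {set {set T}}).
Hypotheses (disEF : [disjoint E & F]) (mF : is_matroid_bases F BF)
  (mA : is_matroid_bases (E :|: F) A)
  (A_traceF : forall B, B \in A -> B :&: F \in BF).

Lemma exchange_toward D B' x : D \in A -> B' \in A -> x \in (D :&: F) :\: B' ->
  exists2 N, N \in A &
    N :&: E = D :&: E /\ (N :&: F) :\: B' = ((D :&: F) :\: B') :\ x.
Proof.
case: mA => _ _ exA hD hB'; rewrite in_setD => /andP[xnB' xDF].
have /setIP[xD xF] := xDF.
have xD' : x \in D :\: B' by rewrite in_setD xnB' xD.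
have [y] := exA D B' hD hB' x xD'.
rewrite in_setD => /andP[ynD yB'] hN.
have yF := exchange_stays_in mF (A_traceF hD) (A_traceF hN) xDF.
exists ((D :\ x) :|: [set y]) => //; split.
- rewrite setI_exchange_out ?(disjointFl disEF yF) //.
  by apply/setDidPl; rewrite disjoint_sym disjoints1 inE (disjointFl disEF xF) andbF.
- rewrite setI_exchange_in //; apply/setP=> z; rewrite !inE.
  by case: (z =P y) => [->|_]; [rewrite yB' /= andbF | rewrite orbF andbCA].
Qed.

(* When the F-part of D is contained in B', both are bases of BF, so they
   coincide and D is the recombination of its E-part with B'. *)
Lemma recombine_end D B' : D \in A -> B' \in A -> D :&: F \subset B' ->
  D = (D :&: E) :|: (B' :&: F).
Proof.
case: mA => _ sA _ hD hB' sDF.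
have sub : D :&: F \subset B' :&: F by rewrite subsetI sDF subsetIr.
rewrite -(basis_subset_eq mF (A_traceF hB') (A_traceF hD) sub) -setIUr.
by apply/esym/setIidPl; exact: sA.
Qed.

Lemma recombine B B' : B \in A -> B' \in A -> (B :&: E) :|: (B' :&: F) \in A.
Proof.
move=> hB hB'.
suff reach n D : #|(D :&: F) :\: B'| = n -> D \in A -> D :&: E = B :&: E ->
    (B :&: E) :|: (B' :&: F) \in A by exact: reach _ B erefl hB erefl.
elim: n D => [|n IH] D cardD hD DE.
- have sDF : D :&: F \subset B' by rewrite -setD_eq0 -cards_eq0 cardD.
  by rewrite -DE -recombine_end.
- have [x xS] : exists x, x \in (D :&: F) :\: B'.
    by apply/set0Pn; rewrite -card_gt0 cardD.
  have [N hN [NE NS]] := exchange_toward hD hB' xS.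
  apply: (IH N) => //; last by rewrite NE.
  by move: cardD; rewrite (cardsD1 x) xS NS => -[].
Qed.

Lemma trace_sum : A = sum_bases (trace E A) (trace F A).
Proof.
apply/setP=> Z; apply/idP/imset2P.
- move=> hZ; exists (Z :&: E) (Z :&: F); try exact: imset_f.
  by rewrite -setIUr; apply/esym/setIidPl; case: mA => _ sA _; exact: sA.
- by case=> _ _ /imsetP[B hB ->] /imsetP[B' hB' ->] ->; exact: recombine.
Qed.

End Recombination.

Lemma setIU_disjoint (T : finType) (E1 E2 X Y : {set T}) :
  [disjoint E1 & E2] -> X \subset E1 -> Y \subset E2 -> (X :|: Y) :&: E1 = X.
Proof.
move=> dis sX sY; rewrite setIUl (setIidPl sX).
suff -> : Y :&: E1 = set0 by rewrite setU0.
apply/eqP; rewrite -subset0 -(disjoint_setI0 dis) setIC.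
exact: setIS.
Qed.

Lemma sum_bases_traces (T : finType) (E1 E2 : {set T}) (B1 B2 : {set {set T}}) Z :
  [disjoint E1 & E2] -> (forall X, X \in B1 -> X \subset E1) ->
  (forall Y, Y \in B2 -> Y \subset E2) -> Z \in sum_bases B1 B2 ->
  Z :&: E1 \in B1 /\ Z :&: E2 \in B2.
Proof.
move=> dis s1 s2 /imset2P[X Y hX hY ->].
rewrite (setIU_disjoint dis (s1 _ hX) (s2 _ hY)) setUC.
by rewrite (setIU_disjoint _ (s2 _ hY) (s1 _ hX)) // disjoint_sym.
Qed.

Lemma sum_basesC (T : finType) (A1 A2 : {set {set T}}) :
  sum_bases A1 A2 = sum_bases A2 A1.
Proof.
by apply/setP=> Z; apply/imset2P/imset2P=> -[X Y hX hY ->]; exists Y X; rewrite // setUC.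
Qed.

Lemma sum_bases_exchange (T : finType) (E1 E2 : {set T}) (A1 A2 : {set {set T}})
    X Y X' Y' x :
  [disjoint E1 & E2] -> is_matroid_bases E1 A1 -> is_matroid_bases E2 A2 ->
  X \in A1 -> Y \in A2 -> X' \in A1 ->
  x \in (X :|: Y) :\: (X' :|: Y') -> x \in X ->
  exists2 y, y \in (X' :|: Y') :\: (X :|: Y) &
    ((X :|: Y) :\ x) :|: [set y] \in sum_bases A1 A2.
Proof.
move=> dis [_ s1 ex1] [_ s2 _] hX hY hX'.
rewrite !inE negb_or => /andP[/andP[xnX' _] _] xX.
have xD : x \in X :\: X' by rewrite in_setD xnX' xX.
have [y] := ex1 X X' hX hX' x xD.
rewrite in_setD => /andP[ynX yX'] hN.
have notinY z : z \in E1 -> z \notin Y.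
  by move=> zE1; apply: contraL zE1 => /(subsetP (s2 _ hY)) /(disjointFl dis) ->.
have ynY := notinY y (subsetP (s1 _ hX') _ yX').
have xnY := notinY x (subsetP (s1 _ hX) _ xX).
exists y; first by rewrite !inE yX' (negbTE ynX) (negbTE ynY).
apply/imset2P; exists ((X :\ x) :|: [set y]) Y => //.
apply/setP=> z; rewrite !inE; case: (z =P y) => [->|_]; first by rewrite !orbT.
by case: (z =P x) => [->|_]; [rewrite (negbTE xnY) | rewrite !orbF].
Qed.

Lemma sum_bases_matroid (T : finType) (E1 E2 : {set T}) (A1 A2 : {set {set T}}) :
  [disjoint E1 & E2] -> is_matroid_bases E1 A1 -> is_matroid_bases E2 A2 ->
  is_matroid_bases (E1 :|: E2) (sum_bases A1 A2).
Proof.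
move=> dis m1 m2; have [n1 s1 _] := m1; have [n2 s2 _] := m2; split.
- case/set0Pn: n1 => X hX; case/set0Pn: n2 => Y hY.
  by apply/set0Pn; exists (X :|: Y); exact: imset2_f.
- by move=> _ /imset2P[X Y hX hY ->]; exact: setUSS (s1 _ hX) (s2 _ hY).
move=> _ _ /imset2P[X Y hX hY ->] /imset2P[X' Y' hX' hY' ->] x hx.
have /setUP[xX|xY] : x \in X :|: Y by case/setDP: hx.
  exact: sum_bases_exchange dis m1 m2 hX hY hX' hx xX.
rewrite [X :|: Y]setUC [X' :|: Y']setUC sum_basesC in hx *.
by apply: sum_bases_exchange m2 m1 hY hX hY' hx xY; rewrite disjoint_sym.
Qed.

Theorem lemma2 (T : finType) (E1 E2 : {set T}) (B1 B2 A : {set {set T}}) :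
  [disjoint E1 & E2] ->
  is_matroid_bases E1 B1 ->
  is_matroid_bases E2 B2 ->
  A \subset sum_bases B1 B2 ->
  A != set0 ->
  (is_matroid_bases (E1 :|: E2) A <->
   exists A1 A2 : {set {set T}},
     [/\ A1 \subset B1, A2 \subset B2,
         is_matroid_bases E1 A1, is_matroid_bases E2 A2 &
         A = sum_bases A1 A2]).
Proof.
move=> dis m1 m2 sA _; split; last first.
  by case=> A1 [A2 [_ _ h1 h2 ->]]; exact: sum_bases_matroid.
move=> mA; have [_ s1 _] := m1; have [_ s2 _] := m2.
have traces B : B \in A -> B :&: E1 \in B1 /\ B :&: E2 \in B2.
  by move/(subsetP sA); exact: sum_bases_traces.
have A_trace1 B (hB : B \in A) := (traces B hB).1.
have A_trace2 B (hB : B \in A) := (traces B hB).2.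
exists (trace E1 A), (trace E2 A); split.
- exact: trace_sub A_trace1.
- exact: trace_sub A_trace2.
- exact: trace_matroid mA m1 A_trace1.
- exact: trace_matroid mA m2 A_trace2.
- exact: trace_sum dis m2 mA A_trace2.
Qed.
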